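(* Let $s\ge 2$. There exists a constant $c>0$ (depending on $s$) such that $A(L,\mathbf 0)=O(2^{-cL})$ as $L\to\infty$; that is, $\|t\|_{U^s[2^L]}^{2^s}=O(2^{-cL})$.
   Context: Let $t(n)=(-1)^{s_2(n)}$ be the Thue-Morse sequence ($s_2$ = binary digit sum). Write $[M]=\{0,\dots,M-1\}$ and $\omega\cdot\mathbf h=\sum_{i=1}^s\omega_ih_i$. $A(L,\mathbf 0)=\mathbb{E}_{n,\mathbf h}\prod_{\omega\in\{0,1\}^s}t(n+\omega\cdot\mathbf h)$, the expectation over all $n\in\mathbb{Z}$, $\mathbf h\in\mathbb{Z}^s$ with $\{n+\omega\cdot\mathbf h:\omega\in\{0,1\}^s\}\subset[2^L]$; this equals $\|t\|_{U^s[2^L]}^{2^s}$, the $2^s$-th power of the Gowers $U^s$ norm of $t$ on $[2^L]$. *)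

From HB Require Import structures.
From mathcomp Require Import all_boot all_order all_algebra.
From mathcomp Require Import reals exp.
Set Implicit Arguments. Unset Strict Implicit. Unset Printing Implicit Defensive.
Import Order.TTheory GRing.Theory Num.Theory.
Local Open Scope ring_scope.

(* binary digit sum s_2(n): bit i of n is odd (n %/ 2^i); bits i > n vanish *)
Definition s2 (n : nat) : nat := (\sum_(i < n.+1) odd (n %/ 2 ^ i))%N.

(* Thue-Morse t(n) = (-1)^{s_2(n)}, for n : int (only n >= 0 is ever used:
   on negative integers we evaluate at |n|, which never occurs below). *)
Definition tm (R : ringType) (z : int) : R := (-1) ^+ s2 `|z|%N.

(* shift vector h in Z^s, encoded by k : 'I_s -> 'I_(2M) via h_i = k_i - M,
   i.e. h_i ranges over [-M, M-1], which contains every admissible h_i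
   (admissibility forces |h_i| <= M-1). *)
Definition hvec (s M : nat) (k : {ffun 'I_s -> 'I_(2 * M)}) (i : 'I_s) : int :=
  (k i)%:Z - M%:Z.

Definition corner (s : nat) (n : int) (h : 'I_s -> int)
  (w : {ffun 'I_s -> bool}) : int :=
  n + \sum_(i < s) (w i)%:Z * h i.

Definition admissible (s M : nat) (n : int) (h : 'I_s -> int) : bool :=
  [forall w : {ffun 'I_s -> bool},
     (0 <= corner n h w) && (corner n h w < M%:Z)].

(* A(L,0) = E_{n,h} prod_omega t(n + omega.h), expectation over all admissible
   (n,h) in Z x Z^s with M = 2^L  (n ranges over [M] since omega = 0 is a corner) *)
Definition A0 (R : realType) (s L : nat) : R :=
  let M := (2 ^ L)%N in
  (\sum_(n < M) \sum_(k : {ffun 'I_s -> 'I_(2 * M)} | admissible M n%:Z (hvec k))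
      \prod_(w : {ffun 'I_s -> bool}) tm R (corner n%:Z (hvec k) w))
  / (#|[set nk : 'I_M * {ffun 'I_s -> 'I_(2 * M)} |
         admissible M (nk.1 : nat)%:Z (hvec nk.2)]|)%:R.

From HB Require Import structures.
From mathcomp Require Import all_boot all_order all_algebra.
From mathcomp Require Import reals exp sequences.
From mathcomp Require Import zify ring lra.
Import Order.TTheory GRing.Theory Num.Theory.
Local Open Scope ring_scope.
Set Implicit Arguments. Unset Strict Implicit. Unset Printing Implicit Defensive.

(* Write G_L(q) for the sum defining A(L,0) in which t is replaced by its restriction to
   [0, 2^L) and each corner n + ω·h is shifted by q(ω) >= 0, so that A(L,0) is G_L(0) divided
   by the number of admissible (n, h). Splitting off the lowest m binary digits E of n and F of
   h, and using t(2^m y + r) = t(r) t(y) for r < 2^m, writes G_{L+m}(q) as a sum over the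
   2^{m(s+1)} digit blocks (E, F) of a sign times G_L(carries). When every q(ω) < 2^k the
   carries are again < 2^k, and the blocks (0, 0) and (0, 2^k (1, 1, 2, ..., 2^{s-2})) both
   have carries 0 but opposite signs, because
     ∏_ω t(ω·(1, 1, 2, ..., 2^{s-2})) = ∏_{x < 2^{s-1}} t(x) t(x+1) = t(0) t(2^{s-1}) = -1.
   Hence |G_{L+m}| <= (2^{m(s+1)} - 2) max |G_L|, whereas there are at least 2^{(L-s)(s+1)}
   admissible (n, h): A(L,0) decays geometrically in L / m. *)

Lemma s2_sum n K : (n <= K)%N -> s2 n = (\sum_(i < K) odd (n %/ 2 ^ i))%N.
Proof.
have high_bits_vanish i : (n <= i)%N -> odd (n %/ 2 ^ i) = false.
  by move=> ni; rewrite divn_small // (leq_trans (ltn_expl n (ltnSn 1))) ?leq_exp2l.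
have sum_low K' : (n <= K')%N ->
    (\sum_(i < K') odd (n %/ 2 ^ i) = \sum_(i < n) odd (n %/ 2 ^ i))%N.
  move=> nK; rewrite [RHS](big_ord_widen _ (fun i => nat_of_bool (odd (n %/ 2 ^ i))) nK).
  rewrite [RHS]big_mkcond; apply: eq_bigr => i _.
  by case: ltnP => // /high_bits_vanish ->.
by move=> nK; rewrite /s2 !sum_low.
Qed.

Lemma s2_odd_double (b : bool) y : s2 (b + 2 * y) = (b + s2 y)%N.
Proof.
have half : ((b + 2 * y) %/ 2 = y)%N.
  by rewrite addnC mulnC divnMDl // divn_small ?addn0 // ltnS leq_b1.
rewrite {1}/s2 big_ord_recl expn0 divn1 oddD oddM /= addbF.
rewrite (@s2_sum y (b + 2 * y)); last lia.
rewrite oddb; congr (_ + _)%N; apply: eq_bigr => i _.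
by rewrite /bump add1n expnS divnMA half.
Qed.

Section ThueMorse.
Variable R : nzRingType.

Lemma tm0 : tm R 0%N = 1.
Proof. by rewrite /tm /s2 big_ord1. Qed.

Lemma tm_odd_double (b : bool) y : tm R (b + 2 * y)%N = (-1) ^+ b * tm R y.
Proof. by rewrite /tm s2_odd_double exprD. Qed.

Lemma tm1 : tm R 1%N = -1.
Proof. by rewrite -[1%N]/(true + 2 * 0)%N tm_odd_double tm0 mulr1. Qed.

Lemma tm_sqr (n : nat) : tm R n * tm R n = 1.
Proof. by rewrite /tm -exprD addnn -mul2n exprM sqrrN !expr1n. Qed.

Lemma tm_split m r y : (r < 2 ^ m)%N -> tm R (r + 2 ^ m * y)%N = tm R r * tm R y.
Proof.
elim: m r => [|m IH] r; first by rewrite expn0 ltnS leqn0 => /eqP ->; rewrite mul1n tm0 mul1r.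
rewrite expnS => r_lt.
have rE : r = (odd r + 2 * (r %/ 2))%N by rewrite {1}(divn_eq r 2) modn2 addnC mulnC.
rewrite {1 2}rE -mulnA -addnA -mulnDr !tm_odd_double IH ?mulrA //.
by rewrite ltn_divLR // mulnC.
Qed.

Definition tm_trunc (L : nat) (z : int) : R :=
  if (0 <= z) && (z < (2 ^ L)%:Z) then tm R z else 0.

Lemma tm_trunc_split L m (Y : int) r : (r < 2 ^ m)%N ->
  tm_trunc (L + m) ((2 ^ m)%:Z * Y + r%:Z) = tm R r * tm_trunc L Y.
Proof.
move=> r_lt; have P_gt0 : (0 < 2 ^ m)%N by rewrite expn_gt0.
have range : ((0 <= (2 ^ m)%:Z * Y + r%:Z) && ((2 ^ m)%:Z * Y + r%:Z < (2 ^ (L + m))%:Z))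
    = ((0 <= Y) && (Y < (2 ^ L)%:Z)).
  by rewrite expnD PoszM; apply/andP/andP => -[Y_ge0 Y_lt]; split; nia.
rewrite /tm_trunc range; case: ifP => [/andP[Y_ge0 _] | _]; last by rewrite mulr0.
have [y ->] : exists y : nat, Y = y by exists `|Y|%N; rewrite gez0_abs.
by rewrite -PoszM -PoszD addnC tm_split.
Qed.

End ThueMorse.

Lemma normr_tm (R : numDomainType) z : `|tm R z| = 1.
Proof. by rewrite normrX normrN1 expr1n. Qed.

Lemma normr_tm_trunc_le1 (R : numDomainType) L z : `|tm_trunc R L z| <= 1.
Proof. by rewrite /tm_trunc; case: ifP; rewrite ?normr0 ?normr_tm. Qed.

Section BaseDigits.
Variables (a b N : nat).
Hypotheses (eN : N = (a * b)%N) (b_gt0 : (0 < b)%N).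

Lemma digits_lt (x : 'I_a) (y : 'I_b) : (x * b + y < N)%N.
Proof. by rewrite eN; have := ltn_ord x; have := ltn_ord y; nia. Qed.

Definition ord_digits (x : 'I_a) (y : 'I_b) : 'I_N := Ordinal (digits_lt x y).

Lemma high_digit_lt (z : 'I_N) : (z %/ b < a)%N.
Proof. by rewrite ltn_divLR // -eN. Qed.

Definition high_digit (z : 'I_N) : 'I_a := Ordinal (high_digit_lt z).
Definition low_digit (z : 'I_N) : 'I_b := Ordinal (ltn_pmod z b_gt0).

Lemma high_digit_ord x y : high_digit (ord_digits x y) = x.
Proof. by apply: val_inj => /=; rewrite divnMDl // divn_small ?addn0. Qed.

Lemma low_digit_ord x y : low_digit (ord_digits x y) = y.
Proof. by apply: val_inj => /=; rewrite modnMDl modn_small. Qed.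

Lemma digitsK z : ord_digits (high_digit z) (low_digit z) = z.
Proof. by apply: val_inj => /=; rewrite -divn_eq. Qed.

Variable V : nmodType.

Lemma sum_ord_digits (F : 'I_N -> V) :
  \sum_(z < N) F z = \sum_(x < a) \sum_(y < b) F (ord_digits x y).
Proof.
rewrite pair_big (reindex (fun p : 'I_a * 'I_b => ord_digits p.1 p.2)) //.
exists (fun z => (high_digit z, low_digit z)) => [[x y] _ | z _] /=; last exact: digitsK.
by rewrite high_digit_ord low_digit_ord.
Qed.

Lemma sum_ffun_ord_digits (I : finType) (F : {ffun I -> 'I_N} -> V) :
  \sum_(k : {ffun I -> 'I_N}) F k =
  \sum_(k1 : {ffun I -> 'I_a}) \sum_(k2 : {ffun I -> 'I_b})
    F [ffun i => ord_digits (k1 i) (k2 i)].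
Proof.
rewrite pair_big (reindex (fun p : {ffun I -> 'I_a} * {ffun I -> 'I_b} =>
  [ffun i => ord_digits (p.1 i) (p.2 i)])) //.
exists (fun k : {ffun I -> 'I_N} =>
    ([ffun i => high_digit (k i)], [ffun i => low_digit (k i)])).
  move=> [k1 k2] _ /=.
  by congr pair; apply/ffunP => i; rewrite !ffunE ?high_digit_ord ?low_digit_ord.
by move=> k _; apply/ffunP => i; rewrite !ffunE digitsK.
Qed.

End BaseDigits.

Section Cube.
Variable s : nat.

Definition cube_cons (b : bool) (w : {ffun 'I_s -> bool}) : {ffun 'I_s.+1 -> bool} :=
  [ffun i => oapp w b (unlift ord0 i)].

Lemma cube_cons0 b w : cube_cons b w ord0 = b.
Proof. by rewrite ffunE unlift_none. Qed.

Lemma cube_consS b w j : cube_cons b w (lift ord0 j) = w j.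
Proof. by rewrite ffunE liftK. Qed.

Lemma cube_cons_eta (w : {ffun 'I_s.+1 -> bool}) :
  w = cube_cons (w ord0) [ffun j => w (lift ord0 j)].
Proof. by apply/ffunP => i; rewrite ffunE; case: unliftP => [j|] -> /=; rewrite ?ffunE. Qed.

Lemma big_cube_cons (T : Type) (idx : T) (op : Monoid.com_law idx)
    (P : {ffun 'I_s.+1 -> bool} -> T) :
  \big[op/idx]_(w : {ffun 'I_s.+1 -> bool}) P w =
  \big[op/idx]_(w : {ffun 'I_s -> bool}) op (P (cube_cons false w)) (P (cube_cons true w)).
Proof.
rewrite (reindex (fun p : bool * {ffun 'I_s -> bool} => cube_cons p.1 p.2)) /=; last first.
  exists (fun w => (w ord0, [ffun j => w (lift ord0 j)])) => [[b w] _ | w _] /=.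
    by rewrite cube_cons0; congr pair; apply/ffunP => j; rewrite ffunE cube_consS.
  by rewrite -cube_cons_eta.
rewrite -(pair_big xpredT xpredT (fun b w => P (cube_cons b w))) /= big_bool /= -big_split /=.
by apply: eq_bigr => w _; rewrite Monoid.mulmC.
Qed.

Definition binval (b : 'I_s -> bool) : nat := \sum_(j < s) b j * 2 ^ j.

End Cube.

Lemma binval_lt s (b : 'I_s -> bool) : (binval b < 2 ^ s)%N.
Proof.
elim: s b => [|s IH] b; first by rewrite /binval big_ord0.
rewrite /binval big_ord_recr /= expnS.
have := IH (fun j => b (widen_ord (leqnSn s) j)); rewrite /binval.
case: (b ord_max) => lt; rewrite ?mul1n ?mul0n mul2n -addnn.
  by rewrite -addSn leq_add.
by rewrite addn0 (leq_trans lt) ?leq_addr.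
Qed.

Lemma binval_cons s b (w : {ffun 'I_s -> bool}) : binval (cube_cons b w) = (b + 2 * binval w)%N.
Proof.
rewrite /binval big_ord_recl cube_cons0 muln1 big_distrr; congr (_ + _)%N.
by apply: eq_bigr => j _; rewrite cube_consS expnS mulnCA.
Qed.

Lemma prod_tm_binval_succ (R : comNzRingType) s :
  \prod_(w : {ffun 'I_s -> bool}) (tm R (binval w) * tm R (binval w).+1) = -1.
Proof.
elim: s => [|s IH].
  rewrite (eq_bigr (fun _ => tm R 0%N * tm R 1%N)) => [|w _]; last by rewrite /binval big_ord0.
  by rewrite prodr_const card_ffun card_bool card_ord expr1 tm0 tm1 mul1r.
rewrite big_cube_cons -IH; apply: eq_bigr => w _; rewrite !binval_cons.
have -> : (false + 2 * binval w).+1 = (true + 2 * binval w)%N by [].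
have -> : (true + 2 * binval w).+1 = (false + 2 * (binval w).+1)%N by rewrite mulnS.
rewrite !tm_odd_double expr0 expr1 !mul1r.
have := tm_sqr R (binval w); move: (tm R _) (tm R _.+1) => t t' t_sqr /=.
by transitivity (t * t * (t * t')); [ring | rewrite t_sqr mul1r].
Qed.

Definition pattern_sum s (w : {ffun 'I_s.+1 -> bool}) : nat := \sum_(i < s.+1) w i * 2 ^ i.-1.

Lemma pattern_sum_cons s b (w : {ffun 'I_s -> bool}) :
  pattern_sum (cube_cons b w) = (b + binval w)%N.
Proof.
rewrite /pattern_sum big_ord_recl cube_cons0 muln1; congr (_ + _)%N.
by apply: eq_bigr => j _; rewrite cube_consS.
Qed.

Lemma pattern_sum_lt s (w : {ffun 'I_s.+1 -> bool}) : (pattern_sum w < 2 ^ s.+1)%N.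
Proof.
rewrite (cube_cons_eta w) pattern_sum_cons expnS.
move: (binval_lt [ffun j : 'I_s => w (lift ord0 j)]) (w ord0); move: (binval _) => x + b.
by case: b; lia.
Qed.

Lemma prod_tm_pattern_sum (R : comNzRingType) s :
  \prod_(w : {ffun 'I_s.+1 -> bool}) tm R (pattern_sum w) = -1.
Proof.
rewrite big_cube_cons -(prod_tm_binval_succ R s); apply: eq_bigr => w _.
by rewrite !pattern_sum_cons.
Qed.

Lemma corner_affine s (c n E : int) (h h1 f : 'I_s -> int) w :
  (forall i, h i = c * h1 i + f i) -> corner (c * n + E) h w = c * corner n h1 w + corner E f w.
Proof.
move=> hE; rewrite /corner (eq_bigr (fun i => c * ((w i)%:Z * h1 i) + (w i)%:Z * f i)).
  by rewrite big_split /= -mulr_sumr; ring.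
by move=> i _; rewrite hE; ring.
Qed.

Section GowersSum.
Variables (R : comNzRingType) (s : nat).
Notation cube := {ffun 'I_s -> bool}.

Definition gowers_sum (L : nat) (q : cube -> nat) : R :=
  \sum_(n < 2 ^ L) \sum_(k : {ffun 'I_s -> 'I_(2 * 2 ^ L)})
    \prod_(w : cube) tm_trunc R L (corner n%:Z (hvec k) w + (q w)%:Z).

Definition low_corner m (q : cube -> nat) (E : 'I_(2 ^ m)) (F : {ffun 'I_s -> 'I_(2 ^ m)})
  (w : cube) : nat := (E + \sum_(i < s) w i * F i + q w)%N.

Definition digit_term L m q (E : 'I_(2 ^ m)) (F : {ffun 'I_s -> 'I_(2 ^ m)}) : R :=
  (\prod_(w : cube) tm R (low_corner q E F w %% 2 ^ m)%N) *
  gowers_sum L (fun w => low_corner q E F w %/ 2 ^ m)%N.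

Lemma low_cornerE m q E F w :
  (@low_corner m q E F w)%:Z = corner E%:Z (fun i => (F i)%:Z) w + (q w)%:Z.
Proof.
rewrite /low_corner /corner !PoszD; congr (_ + _ + _).
by rewrite (big_morph Posz PoszD (erefl 0%:Z)); apply: eq_bigr => i _; rewrite PoszM.
Qed.

Lemma corner_ord_digits L m (eN : (2 ^ (L + m) = 2 ^ L * 2 ^ m)%N)
    (eK : (2 * 2 ^ (L + m) = 2 * 2 ^ L * 2 ^ m)%N) (m_gt0 : (0 < 2 ^ m)%N) n E
    (k : {ffun 'I_s -> 'I_(2 * 2 ^ L)}) (F : {ffun 'I_s -> 'I_(2 ^ m)}) q w :
  corner (ord_digits eN m_gt0 n E) (hvec [ffun i => ord_digits eK m_gt0 (k i) (F i)]) w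
    + (q w)%:Z
  = (2 ^ m)%:Z * (corner n (hvec k) w + (low_corner q E F w %/ 2 ^ m)%N%:Z)
    + (low_corner q E F w %% 2 ^ m)%N%:Z.
Proof.
have -> : (ord_digits eN m_gt0 n E : nat)%:Z = (2 ^ m)%:Z * n%:Z + E%:Z.
  by rewrite /= PoszD PoszM mulrC.
rewrite (@corner_affine _ _ _ _ _ (hvec k) (fun i => (F i)%:Z)) => [|i]; last first.
  by rewrite /hvec ffunE /= PoszD !PoszM expnD PoszM; ring.
rewrite -addrA -low_cornerE {1}(divn_eq (low_corner q E F w) (2 ^ m)) PoszD PoszM; ring.
Qed.

Lemma gowers_sum_rec L m q :
  gowers_sum (L + m) q =
    \sum_(E < 2 ^ m) \sum_(F : {ffun 'I_s -> 'I_(2 ^ m)}) digit_term L q E F.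
Proof.
have m_gt0 : (0 < 2 ^ m)%N by rewrite expn_gt0.
have eK : (2 * 2 ^ (L + m) = 2 * 2 ^ L * 2 ^ m)%N by rewrite expnD mulnA.
rewrite /gowers_sum (sum_ord_digits (expnD 2 L m) m_gt0).
under eq_bigr do under eq_bigr do rewrite (sum_ffun_ord_digits eK m_gt0).
rewrite exchange_big; apply: eq_bigr => E _.
under [RHS]eq_bigr do rewrite /digit_term /gowers_sum mulr_sumr.
rewrite [RHS]exchange_big; apply: eq_bigr => n _.
under [RHS]eq_bigr do rewrite mulr_sumr; rewrite [RHS]exchange_big.
apply: eq_bigr => k _; apply: eq_bigr => F _; rewrite -big_split; apply: eq_bigr => w _ /=.
by rewrite (corner_ord_digits (expnD 2 L m)) tm_trunc_split ?ltn_pmod.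
Qed.

Lemma eq_gowers_sum L (q1 q2 : cube -> nat) : q1 =1 q2 -> gowers_sum L q1 = gowers_sum L q2.
Proof. by move=> q12; do 3!apply: eq_bigr => ? _; rewrite q12. Qed.

End GowersSum.

Lemma gowers_sum_trivial (R : numDomainType) s L (q : {ffun 'I_s -> bool} -> nat) :
  `|gowers_sum R L q| <= (2 ^ L * (2 * 2 ^ L) ^ s)%:R.
Proof.
rewrite /gowers_sum; apply: (le_trans (ler_norm_sum _ _ _)).
apply: (@le_trans _ _ (\sum_(n < 2 ^ L) ((2 * 2 ^ L) ^ s)%:R)); last first.
  by rewrite sumr_const card_ord -mulrnA mulnC.
apply: ler_sum => n _; apply: (le_trans (ler_norm_sum _ _ _)).
apply: (@le_trans _ _ (\sum_(h : {ffun 'I_s -> 'I_(2 * 2 ^ L)}) 1)); last first.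
  by rewrite sumr_const card_ffun !card_ord.
apply: ler_sum => h _; rewrite normr_prod; apply: prodr_ile1 => w _.
by rewrite normr_ge0 normr_tm_trunc_le1.
Qed.

Lemma norm_sum_cancel_pair (R : numDomainType) (T : finType) (f : T -> R) (a b : T) (B : R) :
  a != b -> f a + f b = 0 -> (forall x, `|f x| <= B) -> `|\sum_x f x| <= B * (#|T|%:R - 2).
Proof.
move=> ab fab fB; rewrite (bigD1 a) // (bigD1 b) 1?eq_sym //= addrA fab add0r.
have split_const : \sum_(x : T) B = B + (B + \sum_(x | (x != a) && (x != b)) B).
  by rewrite (bigD1 a) // (bigD1 b) 1?eq_sym.
have -> : B * (#|T|%:R - 2) = \sum_(x | (x != a) && (x != b)) B.
  by rewrite mulrBr mulr_natr -sumr_const split_const; ring.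
by apply: (le_trans (ler_norm_sum _ _ _)); apply: ler_sum => x _.
Qed.

Section Decay.
Variables (R : numDomainType) (s k : nat).
Notation S := s.+1.
Notation cube := {ffun 'I_S -> bool}.
Hypothesis k_large : (S.+2 <= 2 ^ k)%N.
Let m := (k + S)%N.

Definition small_offset (q : cube -> nat) := forall w, (q w < 2 ^ k)%N.

Lemma small_offset_carry q (E : 'I_(2 ^ m)) (F : {ffun 'I_S -> 'I_(2 ^ m)}) :
  small_offset q -> small_offset (fun w => low_corner q E F w %/ 2 ^ m)%N.
Proof.
move=> q_small w /=; rewrite ltn_divLR ?expn_gt0 // /low_corner.
have sum_le : (\sum_(i < S) w i * F i <= S * 2 ^ m)%N.
  rewrite -[S in (_ <= S * _)%N]card_ord -sum_nat_const; apply: leq_sum => i _.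
  by case: (w i); rewrite ?mul1n ?mul0n // ltnW.
have q_lt : (q w < 2 ^ m)%N by rewrite (leq_trans (q_small w)) // leq_exp2l ?leq_addr.
apply: (leq_trans _ (leq_mul k_large (leqnn (2 ^ m)))).
by move: (ltn_ord E) sum_le q_lt; rewrite !mulSn; lia.
Qed.

Lemma digit_term_cancel L q (E : 'I_(2 ^ m)) (F0 F1 : {ffun 'I_S -> 'I_(2 ^ m)}) :
    small_offset q -> E = 0%N :> nat -> (forall i, F0 i = 0%N :> nat) ->
    (forall i, F1 i = 2 ^ k * 2 ^ i.-1 :> nat)%N ->
  digit_term R L q E F0 + digit_term R L q E F1 = 0.
Proof.
move=> q_small E0 F00 F1E.
have low0 w : low_corner q E F0 w = q w.
  by rewrite /low_corner E0 big1 ?add0n // => i _; rewrite F00 muln0.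
have low1 w : low_corner q E F1 w = (q w + 2 ^ k * pattern_sum w)%N.
  rewrite /low_corner E0 add0n addnC big_distrr; congr (_ + _)%N.
  by apply: eq_bigr => i _; rewrite F1E mulnCA.
have low0_lt w : (q w < 2 ^ m)%N by rewrite (leq_trans (q_small w)) // leq_exp2l ?leq_addr.
have low1_lt w : (q w + 2 ^ k * pattern_sum w < 2 ^ m)%N.
  rewrite /m expnD; move: (q_small w) (pattern_sum_lt w).
  by move: (pattern_sum w) (q w) (2 ^ k)%N (2 ^ S)%N => P Q K T; nia.
rewrite /digit_term.
rewrite (@eq_gowers_sum _ _ _ _ (fun=> 0%N)) => [|w]; last by rewrite low0 divn_small.
rewrite [X in _ + _ * X](@eq_gowers_sum _ _ _ _ (fun=> 0%N)) => [|w]; last by rewrite low1 divn_small.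
rewrite (eq_bigr (fun w => tm R (q w))) => [|w _]; last by rewrite low0 modn_small.
rewrite [X in _ + X * _](eq_bigr (fun w => tm R (q w) * tm R (pattern_sum w))) => [|w _].
  by rewrite big_split /= prod_tm_pattern_sum mulrN1 mulNr addrN.
by rewrite low1 modn_small // tm_split.
Qed.

Lemma gowers_sum_step L (B : R) q :
    (forall q', small_offset q' -> `|gowers_sum R L q'| <= B) -> small_offset q ->
  `|gowers_sum R (L + m) q| <= B * (((2 ^ m) ^ S.+1)%:R - 2).
Proof.
move=> G_le q_small.
have m_gt0 : (0 < 2 ^ m)%N by rewrite expn_gt0.
have F1_lt (i : 'I_S) : (2 ^ k * 2 ^ i.-1 < 2 ^ m)%N.
  by rewrite /m expnD ltn_pmul2l ?expn_gt0 // ltn_exp2l // (leq_ltn_trans (leq_pred i)).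
pose E0 : 'I_(2 ^ m) := Ordinal m_gt0.
pose F0 : {ffun 'I_S -> 'I_(2 ^ m)} := [ffun => E0].
pose F1 : {ffun 'I_S -> 'I_(2 ^ m)} := [ffun i => Ordinal (F1_lt i)].
have F01 : F0 != F1.
  apply/eqP => /ffunP /(_ ord0) /(congr1 val); rewrite !ffunE /= muln1.
  by move/esym/eqP; rewrite expn_eq0.
have card_digits : #|{: 'I_(2 ^ m) * {ffun 'I_S -> 'I_(2 ^ m)}}| = ((2 ^ m) ^ S.+1)%N.
  by rewrite card_prod card_ffun !card_ord -expnS.
rewrite gowers_sum_rec pair_big /= -card_digits.
apply: (norm_sum_cancel_pair (a := (E0, F0)) (b := (E0, F1))).
- by rewrite xpair_eqE eqxx F01.
- by apply: digit_term_cancel => // i; rewrite ffunE.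
move=> [E F]; rewrite /digit_term normrM normr_prod big1 ?mul1r => [|w _]; last exact: normr_tm.
exact/G_le/small_offset_carry.
Qed.

Lemma gowers_sum_iter j L q : small_offset q ->
  `|gowers_sum R (L + j * m) q| <=
    (2 ^ L * (2 * 2 ^ L) ^ S)%:R * (((2 ^ m) ^ S.+1)%:R - 2) ^+ j.
Proof.
elim: j q => [|j IH] q q_small; first by rewrite addn0 expr0 mulr1 gowers_sum_trivial.
by rewrite mulSnr addnA exprSr mulrA; apply: gowers_sum_step => // q' /IH.
Qed.

Lemma card_digits_gt2 : (2 < (2 ^ m) ^ S.+1)%N.
Proof. by rewrite -expnM -[X in (X < _)%N](expn1 2) ltn_exp2l // /m; nia. Qed.

Lemma gowers_sum0_le L :
  `|gowers_sum R L (fun _ : cube => 0%N)| <=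
    (2 ^ m * (2 * 2 ^ m) ^ S)%:R * (((2 ^ m) ^ S.+1)%:R - 2) ^+ (L %/ m).
Proof.
rewrite {1}(divn_eq L m) addnC.
apply: (le_trans (gowers_sum_iter _ _ _)) => [w|]; first by rewrite expn_gt0.
apply: ler_wpM2r; first by rewrite exprn_ge0 // subr_ge0 ler_nat ltnW // card_digits_gt2.
have r_le : (L %% m <= m)%N by apply/ltnW/ltn_pmod; rewrite /m addnS.
by rewrite ler_nat leq_mul ?leq_exp2r ?leq_mul2l ?leq_exp2l.
Qed.

End Decay.

Definition num_admissible s L : nat :=
  #|[set nh : 'I_(2 ^ L) * {ffun 'I_s -> 'I_(2 * 2 ^ L)} |
     admissible (2 ^ L) (nh.1 : nat)%:Z (hvec nh.2)]|.

Lemma A0E (R : realType) s L :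
  A0 R s L = gowers_sum R L (fun _ : {ffun 'I_s -> bool} => 0%N) / (num_admissible s L)%:R.
Proof.
rewrite /A0 /num_admissible; congr (_ / _); apply: eq_bigr => n _.
rewrite big_mkcond; apply: eq_bigr => h _; case: ifPn => [adm | /forallPn[w out]].
  by apply: eq_bigr => w _; rewrite addr0 /tm_trunc (forallP adm w).
by rewrite (bigD1 w) //= addr0 /tm_trunc (negbTE out) mul0r.
Qed.

Lemma num_admissible_ge s P : ((2 ^ P) ^ s.+1 <= num_admissible s (P + s))%N.
Proof.
have le_M : (2 ^ P <= 2 ^ (P + s))%N by rewrite leq_exp2l ?leq_addr.
have shift_lt (f : 'I_(2 ^ P)) : (f + 2 ^ (P + s) < 2 * 2 ^ (P + s))%N.
  by rewrite mul2n -addnn ltn_add2r (leq_trans (ltn_ord f)).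
pose emb (p : 'I_(2 ^ P) * {ffun 'I_s -> 'I_(2 ^ P)}) :=
  (widen_ord le_M p.1, [ffun i => Ordinal (shift_lt (p.2 i))]).
have emb_inj : injective emb.
  move=> [n h] [n' h'] [/val_inj -> hh]; congr pair.
  by apply/ffunP => i; move/ffunP/(_ i): hh; rewrite !ffunE => -[/addIn /val_inj].
have -> : ((2 ^ P) ^ s.+1 = #|emb @: setT|)%N.
  by rewrite card_imset // cardsT card_prod card_ffun !card_ord -expnS.
apply/subset_leq_card/subsetP => _ /imsetP[[n h] _ ->]; rewrite inE; apply/forallP => w /=.
have -> : corner n (hvec (emb (n, h)).2) w = (n + \sum_(i < s) w i * h i)%N%:Z.
  rewrite /corner PoszD (big_morph Posz PoszD (erefl 0%:Z)); congr (_ + _).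
  by apply: eq_bigr => i _; rewrite /hvec ffunE /= PoszD addrK PoszM.
rewrite lez_nat leq0n ltz_nat /=.
have sum_le : (\sum_(i < s) w i * h i <= s * (2 ^ P).-1)%N.
  rewrite -[s in (_ <= s * _)%N]card_ord -sum_nat_const; apply: leq_sum => i _.
  by have := ltn_ord (h i); case: (w i); rewrite ?mul1n ?mul0n //; lia.
have s_lt : (s.+1 <= 2 ^ s)%N by rewrite ltn_expl.
apply: (leq_ltn_trans (leq_add (leqnn n) sum_le)); rewrite expnD.
move: (nat_of_ord n) (ltn_ord n) s_lt; move: (2 ^ P)%N (2 ^ s)%N => M T x.
nia.
Qed.

Lemma geometric_decay (R : realType) (th : R) (m : nat) : 0 < th < 1 -> (0 < m)%N ->
  exists2 c : R, 0 < c & forall L : nat, th ^+ (L %/ m) <= th^-1 * 2 `^ (- (c * L%:R)).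
Proof.
move=> /andP[th_gt0 th_lt1] m_gt0.
have ln2_gt0 : 0 < ln (2 : R) by rewrite ln_gt0 // ltr1n.
have lnth_lt0 : ln th < 0 by rewrite ln_lt0 // th_gt0 th_lt1.
have m_pos : 0 < (m%:R : R) by rewrite ltr0n.
exists (- ln th / (m%:R * ln 2)); first by rewrite divr_gt0 ?oppr_gt0 ?mulr_gt0.
move=> L; set j := (L %/ m)%N.
have L_lt : L%:R / m%:R <= j.+1%:R :> R.
  by rewrite ler_pdivrMr // -natrM ler_nat ltnW // mulSnr (divn_eq L m) ltn_add2l ltn_pmod.
have -> : th ^+ j = expR (ln th * j%:R) by rewrite expRM_natr lnK // posrE.
have -> : th^-1 = expR (- ln th) by rewrite expRN lnK // posrE.
rewrite /powR pnatr_eq0 /= -expRD ler_expR.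
have -> : - (- ln th / (m%:R * ln 2) * L%:R) * ln 2 = ln th * (L%:R / m%:R).
  by field; rewrite gt_eqF ?lt0r_neq0.
rewrite -natr1 in L_lt; nra.
Qed.

Lemma pow_digits_le S m j P : (j * m <= P + S)%N ->
  (((2 ^ m) ^ S.+1) ^ j <= 2 ^ (S * S.+1) * (2 ^ P) ^ S.+1)%N.
Proof. by move=> jm; rewrite -!expnM -expnD leq_exp2l //; nia. Qed.

Section Main.
Variables (R : realType) (s k : nat).
Notation S := s.+1.
Hypothesis k_large : (S.+2 <= 2 ^ k)%N.
Let m := (k + S)%N.
Let N : R := ((2 ^ m) ^ S.+1)%:R.

Lemma A0_le_geometric L : (S <= L)%N ->
  `|A0 R S L| <= (2 ^ m * (2 * 2 ^ m) ^ S * 2 ^ (S * S.+1))%:R * ((N - 2) / N) ^+ (L %/ m).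
Proof.
move=> L_ge; have [P ->] : exists P, L = (P + S)%N by exists (L - S)%N; rewrite subnK.
set j := ((P + S) %/ m)%N.
have N_gt0 : 0 < N by rewrite ltr0n !expn_gt0.
have den_ge : ((2 ^ P) ^ S.+1)%:R <= (num_admissible S (P + S))%:R :> R.
  by rewrite ler_nat num_admissible_ge.
have den_gt0 : 0 < ((2 ^ P) ^ S.+1)%:R :> R by rewrite ltr0n !expn_gt0.
have Nj_le : N ^+ j <= (2 ^ (S * S.+1))%:R * ((2 ^ P) ^ S.+1)%:R.
  by rewrite -natrX -natrM ler_nat pow_digits_le // /j leq_divM.
rewrite A0E normrM normfV (ger0_norm (ler0n _ _)) ler_pdivrMr ?(lt_le_trans den_gt0) //.
apply: (le_trans (gowers_sum0_le _ k_large _)); rewrite -/m -/N -/j.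
set C0 : R := (2 ^ m * (2 * 2 ^ m) ^ S)%:R; set th := (N - 2) / N.
have th_ge0 : 0 <= th by rewrite divr_ge0 ?subr_ge0 ?(ltW N_gt0) // ler_nat ltnW // card_digits_gt2.
have thj_ge0 : 0 <= th ^+ j by rewrite exprn_ge0.
have C0_ge0 : 0 <= C0 by rewrite ler0n.
have -> : (N - 2) ^+ j = th ^+ j * N ^+ j by rewrite -exprMn divfK ?gt_eqF.
rewrite natrM -/C0 -!mulrA; apply: ler_wpM2l => //.
rewrite mulrCA; apply: ler_wpM2l => //; apply: (le_trans Nj_le).
by rewrite ler_wpM2l ?ler0n.
Qed.
End Main.

Theorem corollary2p4 (R : realType) (s : nat) :
  (2 <= s)%N ->
  exists c : R, 0 < c /\
    exists C : R, exists L0 : nat, forall L : nat, (L0 <= L)%N ->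
      `|A0 R s L| <= C * ((2 : R) `^ (- (c * L%:R))).
Proof.
(* The argument works for every s > 0; the hypothesis only rules out s = 0. *)
case: s => [//|s] _.
have k_large : (s.+3 <= 2 ^ s.+3)%N by rewrite ltnW // ltn_expl.
pose m := (s.+3 + s.+1)%N; pose N : R := ((2 ^ m) ^ s.+2)%:R.
have N_gt2 : 2 < N by rewrite ltr_nat card_digits_gt2.
have th_bounds : 0 < (N - 2) / N < 1.
  by rewrite divr_gt0 ?subr_gt0 ?ltr_pdivrMr ?mul1r ?gtrDl ?oppr_lt0 //; lra.
have [c c_gt0 decay] := geometric_decay th_bounds (isT : (0 < m)%N).
exists c; split => //.
exists ((2 ^ m * (2 * 2 ^ m) ^ s.+1 * 2 ^ (s.+1 * s.+2))%:R * ((N - 2) / N)^-1), s.+1.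
move=> L L_ge; apply: (le_trans (A0_le_geometric R k_large L_ge)).
by rewrite -mulrA ler_wpM2l ?ler0n.
Qed.
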